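(* Consider the single-sensor system $x_{k+1}=Ax_k+w_k$, $y_k=Cx_k+v_k$ ($w_k,v_k$ independent zero-mean Gaussian with covariances $Q$, $R$), $(A,C)$ detectable, $(A,Q^{1/2})$ stabilizable, with local Kalman filter in steady state with filtered error covariance $\bar P$. Let $f(X)=AXA^T+Q$, $\mathcal{S}=\{f^n(\bar P):n\ge0\}$, $\lambda\in(0,1]$, $E\ge0$, $\beta\in(0,1)$. (i) (Finite horizon.) For $K\ge1$ define $J_{K+1}\equiv0$ and $J_k(P)=\min\{\beta\,\mathrm{tr}f(P)+J_{k+1}(f(P)),\ \beta[\lambda\mathrm{tr}\bar P+(1-\lambda)\mathrm{tr}f(P)]+(1-\beta)E+\lambda J_{k+1}(\bar P)+(1-\lambda)J_{k+1}(f(P))\}$ for $P\in\mathcal{S}$, and let the optimal decision $\nu_k^*(P)\in\{0,1\}$ be $0$ if the first term attains the minimum and $1$ if the second does. Then there exist thresholds $P^{th}_{k-1|k-1}$, $k=1,\dots,K$, such that $\nu_k^*=0$ if $P_{k-1|k-1}<P^{th}_{k-1|k-1}$ and $\nu_k^*=1$ if $P_{k-1|k-1}\ge P^{th}_{k-1|k-1}$, for $P_{k-1|k-1}\in\mathcal{S}$; the thresholds may be infinite (meaning $\nu_k^*=0$ for all $P_{k-1|k-1}\in\mathcal{S}$) when $A$ is stable. (ii) (Infinite horizon.) Let $(\rho,h)$ be the solution of the average-cost Bellman equation $\rho+h(P)=\min\{\beta\,\mathrm{tr}f(P)+h(f(P)),\ \beta[\lambda\mathrm{tr}\bar P+(1-\lambda)\mathrm{tr}f(P)]+(1-\beta)E+\lambda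 h(\bar P)+(1-\lambda)h(f(P))\}$ on $\mathcal{S}$ obtained as the limit of relative value iteration, and let $\nu^*(P)$ be $0$ or $1$ according to which term attains the minimum. Then the optimal policy is of the form $\nu_k^*=0$ if $P_{k-1|k-1}<P^{th}$ and $\nu_k^*=1$ if $P_{k-1|k-1}\ge P^{th}$, for some constant threshold $P^{th}$, which may be infinite when $A$ is stable.
   Context: For symmetric matrices, $X\le Y$ means $Y-X$ is positive semidefinite (by the paper's results $\mathcal{S}$ is totally ordered by this relation), and $X<Y$ means $X\le Y$, $X\ne Y$ within $\mathcal{S}$. $\nu_k=1$ means the sensor transmits its local state estimate at time $k$ over an i.i.d. channel with success probability $\lambda$, at cost $E$; the remote error covariance becomes $\bar P$ on successful reception and $f(P_{k-1|k-1})$ otherwise. A matrix is stable if all eigenvalues have modulus less than one. *)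

From HB Require Import structures.
From mathcomp Require Import all_boot all_order all_algebra.
From mathcomp Require Import all_classical all_reals all_analysis.
From mathcomp Require Import complex.
Set Implicit Arguments. Unset Strict Implicit. Unset Printing Implicit Defensive.
Import Order.TTheory GRing.Theory Num.Theory.
Local Open Scope ring_scope.

Section Defs.
Variable R : realType.

Definition cmx (p q : nat) (M : 'M[R]_(p, q)) : 'M[R[i]]_(p, q) :=
  map_mx (fun x : R => Complex x 0) M.

Definition stable (n : nat) (A : 'M[R]_n) : Prop :=
  forall z : R[i], eigenvalue (cmx A) z -> `|z| < 1.

Definition psd (n : nat) (M : 'M[R]_n) : Prop :=
  M^T = M /\ forall v : 'rV[R]_n, 0 <= (v *m M *m v^T) ord0 ord0.
Definition pd (n : nat) (M : 'M[R]_n) : Prop :=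
  M^T = M /\ forall v : 'rV[R]_n, v != 0 -> 0 < (v *m M *m v^T) ord0 ord0.

Definition loew_le (n : nat) (X Y : 'M[R]_n) : Prop := psd (Y - X).
Definition loew_lt (n : nat) (X Y : 'M[R]_n) : Prop := loew_le X Y /\ X <> Y.

Definition detectable (n m : nat) (A : 'M[R]_n) (C : 'M[R]_(m, n)) : Prop :=
  exists L : 'M[R]_(n, m), stable (A - L *m C).
Definition stabilizable (n m : nat) (A : 'M[R]_n) (B : 'M[R]_(n, m)) : Prop :=
  exists L : 'M[R]_(m, n), stable (A + B *m L).

Definition lyap (n : nat) (A Q : 'M[R]_n) (X : 'M[R]_n) : 'M[R]_n :=
  A *m X *m A^T + Q.

Definition kf_step (n m : nat) (A Q : 'M[R]_n) (C : 'M[R]_(m, n)) (Rv : 'M[R]_m)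
  (P : 'M[R]_n) : 'M[R]_n :=
  let Pm := lyap A Q P in
  Pm - Pm *m C^T *m invmx (C *m Pm *m C^T + Rv) *m C *m Pm.

Definition inS (n : nat) (A Q Pbar : 'M[R]_n) (P : 'M[R]_n) : Prop :=
  exists k : nat, P = iter k (lyap A Q) Pbar.

(* the two terms of the Bellman operator, for a value function h:
   c0 : do not transmit (nu = 0), c1 : transmit (nu = 1) *)
Definition cost0 (n : nat) (A Q : 'M[R]_n) (beta : R) (h : 'M[R]_n -> R)
  (P : 'M[R]_n) : R :=
  beta * \tr (lyap A Q P) + h (lyap A Q P).
Definition cost1 (n : nat) (A Q Pbar : 'M[R]_n) (lam E beta : R)
  (h : 'M[R]_n -> R) (P : 'M[R]_n) : R :=
  beta * (lam * \tr Pbar + (1 - lam) * \tr (lyap A Q P)) + (1 - beta) * E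
  + lam * h Pbar + (1 - lam) * h (lyap A Q P).

Definition bellman (n : nat) (A Q Pbar : 'M[R]_n) (lam E beta : R)
  (h : 'M[R]_n -> R) (P : 'M[R]_n) : R :=
  Num.min (cost0 A Q beta h P) (cost1 A Q Pbar lam E beta h P).

(* finite horizon value functions: J K k = J_k, with J_{K+1} = 0,
   J_k = T J_{k+1}  (defined for k <= K+1) *)
Definition Jfin (n : nat) (A Q Pbar : 'M[R]_n) (lam E beta : R) (K k : nat) :
  'M[R]_n -> R :=
  iter (K.+1 - k) (bellman A Q Pbar lam E beta) (fun _ => 0).

Fixpoint rvi (n : nat) (A Q Pbar : 'M[R]_n) (lam E beta : R) (s0 : 'M[R]_n)
  (m : nat) : 'M[R]_n -> R :=
  match m with
  | 0 => fun _ => 0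
  | m'.+1 => fun P =>
      bellman A Q Pbar lam E beta (rvi A Q Pbar lam E beta s0 m') P
      - bellman A Q Pbar lam E beta (rvi A Q Pbar lam E beta s0 m') s0
  end.

(* The decision rule "nu(P) optimal := 0 if c0 attains the min, 1 if c1 does"
   is of threshold type with threshold T:
   - T = Some Tth : Tth in S, and for P in S, P < Tth -> nu = 0 is optimal
     (c0 <= c1), and P >= Tth -> nu = 1 is optimal (c1 <= c0);
   - T = None (infinite threshold): nu = 0 is optimal on all of S; this can only
     happen when A is stable. *)
Definition threshold_rule (n : nat) (A Q Pbar : 'M[R]_n)
  (c0 c1 : 'M[R]_n -> R) (T : option 'M[R]_n) : Prop :=
  match T with
  | Some Tth => inS A Q Pbar Tth /\
      forall P, inS A Q Pbar P ->
        (loew_lt P Tth -> c0 P <= c1 P) /\ (loew_le Tth P -> c1 P <= c0 P)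
  | None => stable A /\ forall P, inS A Q Pbar P -> c0 P <= c1 P
  end.

End Defs.

(* The Riccati fixed point satisfies [Pbar <= f(Pbar)] and [f] is Loewner
   monotone, so [S = {f^k(Pbar)}] is a nondecreasing chain.  The Bellman
   operator preserves Loewner monotonicity, hence so do the finite-horizon value
   functions, the relative value iterates and their pointwise limit [h].  For a
   monotone value function the gap between the cost of transmitting and that of
   not transmitting is nonincreasing along the chain, so the first point of [S]
   where transmitting is optimal is a threshold.  If there is none, [A] is
   stable: an eigenvalue of modulus at least one, which stabilizability makes
   visible to [Q], would make [tr f^k(Pbar)] unbounded, and transmitting would
   eventually win. *)

From HB Require Import structures.
From mathcomp Require Import all_boot all_order all_algebra.
From mathcomp Require Import all_classical all_reals all_analysis.
From mathcomp Require Import ring lra complex.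
Set Implicit Arguments. Unset Strict Implicit. Unset Printing Implicit Defensive.
Import Order.TTheory GRing.Theory Num.Theory numFieldNormedType.Exports.
Local Open Scope ring_scope.

Section BilinearForm.
Variable R : realType.

Definition bform n (M : 'M[R]_n) (u v : 'rV[R]_n) : R := (u *m M *m v^T) 0 0.

Lemma bformDl n (M : 'M[R]_n) u1 u2 v :
  bform M (u1 + u2) v = bform M u1 v + bform M u2 v.
Proof. by rewrite /bform !mulmxDl mxE. Qed.

Lemma bformZl n (M : 'M[R]_n) k u v : bform M (k *: u) v = k * bform M u v.
Proof. by rewrite /bform -!scalemxAl mxE. Qed.

Lemma bformNl n (M : 'M[R]_n) u v : bform M (- u) v = - bform M u v.
Proof. by rewrite -scaleN1r bformZl mulN1r. Qed.

Lemma bformDr n (M : 'M[R]_n) u v1 v2 :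
  bform M u (v1 + v2) = bform M u v1 + bform M u v2.
Proof. by rewrite /bform linearD /= mulmxDr mxE. Qed.

Lemma bformZr n (M : 'M[R]_n) k u v : bform M u (k *: v) = k * bform M u v.
Proof. by rewrite /bform linearZ /= -scalemxAr mxE. Qed.

Lemma bformNr n (M : 'M[R]_n) u v : bform M u (- v) = - bform M u v.
Proof. by rewrite -scaleN1r bformZr mulN1r. Qed.

Lemma bformDm n (M1 M2 : 'M[R]_n) u v :
  bform (M1 + M2) u v = bform M1 u v + bform M2 u v.
Proof. by rewrite /bform mulmxDr mulmxDl mxE. Qed.

Lemma bformNm n (M : 'M[R]_n) u v : bform (- M) u v = - bform M u v.
Proof. by rewrite /bform mulmxN mulNmx mxE. Qed.

Lemma bform_sym n (M : 'M[R]_n) u v : M^T = M -> bform M u v = bform M v u.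
Proof.
move=> sM; rewrite /bform -[in LHS](trmxK (u *m M *m v^T)) mxE.
by rewrite !trmx_mul trmxK sM mulmxA.
Qed.

Lemma bform_delta n (M : 'M[R]_n) i j :
  bform M (delta_mx 0 i) (delta_mx 0 j) = M i j.
Proof. by rewrite /bform -rowE trmx_delta -colE !mxE. Qed.

Lemma bform_conj n p (B : 'M[R]_(p, n)) (D : 'M[R]_n) (u v : 'rV[R]_p) :
  bform (B *m D *m B^T) u v = bform D (u *m B) (v *m B).
Proof. by rewrite /bform trmx_mul !mulmxA. Qed.

Lemma bform_sum n (M : 'M[R]_n) u :
  bform M u u = \sum_j \sum_i u 0 i * M i j * u 0 j.
Proof.
rewrite /bform mxE; apply: eq_bigr => j _; rewrite !mxE mulr_suml.
by apply: eq_bigr.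
Qed.

Lemma bform1 n (u : 'rV[R]_n) : bform 1%:M u u = \sum_j u 0 j ^+ 2.
Proof. by rewrite /bform mulmx1 mxE; apply: eq_bigr => j _; rewrite mxE expr2. Qed.

Lemma bform1_gt0 n (u : 'rV[R]_n) : u != 0 -> 0 < bform 1%:M u u.
Proof.
move=> u0; rewrite bform1 lt_def sumr_ge0 ?andbT => [|j _]; last exact: sqr_ge0.
apply: contra u0 => /eqP/psumr_eq0P u2_0; apply/eqP/matrixP => i j.
rewrite (ord1 i) mxE; apply/eqP; rewrite -sqrf_eq0; apply/eqP.
by apply: u2_0 => // k _; apply: sqr_ge0.
Qed.

(* [a] and [b] are the real and imaginary parts of a left eigenvector of [A]
   for the eigenvalue [x + iy]. *)
Lemma bform_rotation n (A P : 'M[R]_n) a b x y : P^T = P ->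
  a *m A = x *: a - y *: b -> b *m A = y *: a + x *: b ->
  bform (A *m P *m A^T) a a + bform (A *m P *m A^T) b b =
  (x ^+ 2 + y ^+ 2) * (bform P a a + bform P b b).
Proof.
move=> sP aA bA; rewrite !bform_conj aA bA -!scaleNr.
rewrite !(bformDl, bformDr, bformZl, bformZr) (bform_sym a b sP); ring.
Qed.

End BilinearForm.

Section Psd.
Variable R : realType.

Lemma psd_sym n (M : 'M[R]_n) : psd M -> M^T = M. Proof. by case. Qed.

Lemma psd_bform n (M : 'M[R]_n) v : psd M -> 0 <= bform M v v.
Proof. by case=> _; apply. Qed.

Lemma pd_psd n (M : 'M[R]_n) : pd M -> psd M.
Proof.
move=> [sM pM]; split=> // v; have [->|v0] := eqVneq v 0.
  by rewrite !mul0mx mxE.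
exact/ltW/pM.
Qed.

Lemma psd0 n : psd (0 : 'M[R]_n).
Proof. by split=> [|v]; rewrite ?trmx0 // mulmx0 mul0mx mxE. Qed.

Lemma psd1 n : psd (1%:M : 'M[R]_n).
Proof.
split=> [|v]; first by rewrite trmx1.
change (0 <= bform 1%:M v v).
by rewrite bform1 sumr_ge0 // => j _; apply: sqr_ge0.
Qed.

Lemma psdD n (X Y : 'M[R]_n) : psd X -> psd Y -> psd (X + Y).
Proof.
move=> [sX pX] [sY pY]; split=> [|v]; first by rewrite linearD /= sX sY.
by change (0 <= bform (X + Y) v v); rewrite bformDm addr_ge0 ?pX ?pY.
Qed.

Lemma psd_conj n p (B : 'M[R]_(p, n)) (D : 'M[R]_n) :
  psd D -> psd (B *m D *m B^T).
Proof.
move=> [sD pD]; split=> [|v]; first by rewrite !trmx_mul trmxK sD mulmxA.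
by change (0 <= bform (B *m D *m B^T) v v); rewrite bform_conj pD.
Qed.

Lemma psd_sqr n (M : 'M[R]_n) : M^T = M -> psd (M *m M).
Proof. by move=> sM; rewrite -{2}sM -{1}[M]mulmx1; apply/psd_conj/psd1. Qed.

Lemma psd_diag n (M : 'M[R]_n) i : psd M -> 0 <= M i i.
Proof. by move=> pM; rewrite -bform_delta psd_bform. Qed.

Lemma psd_diag_le_tr n (M : 'M[R]_n) i : psd M -> M i i <= \tr M.
Proof.
move=> pM; rewrite /mxtrace (bigD1 i) //= lerDl sumr_ge0 // => j _.
exact: psd_diag.
Qed.

Lemma psd_tr n (M : 'M[R]_n) : psd M -> 0 <= \tr M.
Proof. by move=> pM; rewrite sumr_ge0 // => i _; apply: psd_diag. Qed.

(* Expand [(e_i +- e_j) M (e_i +- e_j)^T >= 0]. *)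
Lemma psd_entry_le_tr n (M : 'M[R]_n) i j : psd M -> `|M i j| <= \tr M.
Proof.
move=> pM; have Mji : M j i = M i j by rewrite -[in RHS](psd_sym pM) mxE.
have := psd_bform (delta_mx 0 i + delta_mx 0 j) pM.
have := psd_bform (delta_mx 0 i - delta_mx 0 j) pM.
rewrite !(bformDl, bformDr, bformNl, bformNr, bform_delta) opprK Mji.
have := psd_diag_le_tr i pM; have := psd_diag_le_tr j pM.
have := psd_diag i pM; have := psd_diag j pM.
by rewrite ler_norml => *; apply/andP; split; lra.
Qed.

Lemma bform_le_tr n (M : 'M[R]_n) (u : 'rV[R]_n) :
  psd M -> bform M u u <= (\sum_i `|u 0 i|) ^+ 2 * \tr M.
Proof.
move=> pM; rewrite bform_sum expr2 mulrAC mulr_sumr.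
apply: ler_sum => j _; rewrite !mulr_suml; apply: ler_sum => i _.
rewrite (le_trans (ler_norm _)) // !normrM ler_wpM2r // ler_wpM2l //.
exact: psd_entry_le_tr.
Qed.

Lemma psd_antisym n (D : 'M[R]_n) : psd D -> psd (- D) -> D = 0.
Proof.
move=> pD pND; have sD := psd_sym pD.
have D0 v : bform D v v = 0.
  apply/eqP; rewrite eq_le psd_bform // andbT -oppr_ge0 -bformNm.
  exact: psd_bform.
apply/matrixP => i j; have := D0 (delta_mx 0 i + delta_mx 0 j).
have Dji : D j i = D i j by rewrite -[in RHS]sD mxE.
by rewrite bformDl !bformDr !D0 !bform_delta Dji mxE => Dij; lra.
Qed.

Lemma pdDl n (X Y : 'M[R]_n) : psd X -> pd Y -> pd (X + Y).
Proof.
move=> pX [sY pY]; split=> [|v v0]; first by rewrite linearD /= psd_sym // sY.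
by change (0 < bform (X + Y) v v); rewrite bformDm ltr_wpDl ?psd_bform ?pY.
Qed.

Lemma pd_unitmx n (M : 'M[R]_n) : pd M -> M \in unitmx.
Proof.
move=> [_ pM]; rewrite unitmxE unitfE; apply/negP => /det0P[v v0 vM].
by have := pM v v0; rewrite vM mul0mx mxE ltxx.
Qed.

(* [v X M^-1 X^T v^T = y M y^T] with [y = v X M^-1]. *)
Lemma psd_conj_inv n p (X : 'M[R]_(n, p)) (M : 'M[R]_p) :
  pd M -> psd (X *m invmx M *m X^T).
Proof.
move=> pdM; have [sM _] := pdM; have uM := pd_unitmx pdM.
have sN : (invmx M)^T = invmx M by rewrite trmx_inv sM.
split=> [|v]; first by rewrite !trmx_mul trmxK sN mulmxA.
have -> : v *m (X *m invmx M *m X^T) *m v^T =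
          (v *m X *m invmx M) *m M *m (v *m X *m invmx M)^T.
  by rewrite !trmx_mul sN -[_ *m M]mulmxA mulVmx // mulmx1 !mulmxA.
exact: (psd_bform _ (pd_psd pdM)).
Qed.

Lemma loew_refl n (X : 'M[R]_n) : loew_le X X.
Proof. by rewrite /loew_le subrr; apply: psd0. Qed.

Lemma loew_trans n (X Y Z : 'M[R]_n) : loew_le X Y -> loew_le Y Z -> loew_le X Z.
Proof. by rewrite /loew_le => XY YZ; have := psdD YZ XY; rewrite addrA subrK. Qed.

Lemma loew_antisym n (X Y : 'M[R]_n) : loew_le X Y -> loew_le Y X -> X = Y.
Proof.
rewrite /loew_le => XY YX; apply/eqP; rewrite eq_sym -subr_eq0.
by apply/eqP/psd_antisym; rewrite ?opprB.
Qed.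

Lemma loew_le_tr n (X Y : 'M[R]_n) : loew_le X Y -> \tr X <= \tr Y.
Proof. by move=> /psd_tr; rewrite linearB subr_ge0. Qed.

End Psd.

Section Lyapunov.
Variable R : realType.

Lemma lyapB n (A Q P P' : 'M[R]_n) :
  lyap A Q P' - lyap A Q P = A *m (P' - P) *m A^T.
Proof. by rewrite /lyap mulmxBr mulmxBl opprD addrACA subrr addr0. Qed.

Lemma loew_le_lyap n (A Q P P' : 'M[R]_n) :
  loew_le P P' -> loew_le (lyap A Q P) (lyap A Q P').
Proof. by rewrite /loew_le lyapB; apply: psd_conj. Qed.

Lemma psd_lyap n (A Q P : 'M[R]_n) : psd Q -> psd P -> psd (lyap A Q P).
Proof. by move=> pQ pP; apply: psdD => //; apply: psd_conj. Qed.

Lemma psd_iter_lyap n (A Q P : 'M[R]_n) k :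
  psd Q -> psd P -> psd (iter k (lyap A Q) P).
Proof. by move=> pQ pP; elim: k => //= k; apply: psd_lyap. Qed.

Lemma inS_lyap n (A Q Pbar P : 'M[R]_n) :
  inS A Q Pbar P -> inS A Q Pbar (lyap A Q P).
Proof. by case=> k ->; exists k.+1. Qed.

Lemma loew_le_iter_lyap n (A Q P : 'M[R]_n) i j :
  loew_le P (lyap A Q P) -> (i <= j)%N ->
  loew_le (iter i (lyap A Q) P) (iter j (lyap A Q) P).
Proof.
move=> Pf /subnK <-; elim: (j - i)%N => [|d IHd]; first exact: loew_refl.
apply: loew_trans IHd _; rewrite addSn.
by elim: (d + i)%N => //= k; apply: loew_le_lyap.
Qed.

(* The Riccati fixed point equation reads
   [f(Pbar) - Pbar = X (C f(Pbar) C^T + Rv)^-1 X^T] with [X = f(Pbar) C^T]. *)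
Lemma kf_fixpoint_le_lyap n m (A Q : 'M[R]_n) (C : 'M[R]_(m, n)) (Rv : 'M[R]_m)
    (Pbar : 'M[R]_n) :
  psd Q -> pd Rv -> psd Pbar -> kf_step A Q C Rv Pbar = Pbar ->
  loew_le Pbar (lyap A Q Pbar).
Proof.
move=> pQ pdRv pP kfP; set Pm := lyap A Q Pbar.
have pPm : psd Pm by apply: psd_lyap.
have pdM : pd (C *m Pm *m C^T + Rv) by apply: pdDl => //; apply: psd_conj.
rewrite /loew_le; suff -> : Pm - Pbar =
    Pm *m C^T *m invmx (C *m Pm *m C^T + Rv) *m (Pm *m C^T)^T.
  exact: psd_conj_inv.
rewrite -{1}kfP /kf_step -/Pm opprB addrC subrK.
by rewrite trmx_mul trmxK (psd_sym pPm) !mulmxA.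
Qed.

End Lyapunov.

Section UnstableMode.
Variable R : realType.

Lemma cmxE p q (M : 'M[R]_(p, q)) : cmx M = map_mx (real_complex R) M.
Proof. by apply/matrixP => i j; rewrite !mxE. Qed.

Lemma cmxD p q (M1 M2 : 'M[R]_(p, q)) : cmx (M1 + M2) = cmx M1 + cmx M2.
Proof. by rewrite !cmxE map_mxD. Qed.

Lemma cmxM p q r (M1 : 'M[R]_(p, q)) (M2 : 'M[R]_(q, r)) :
  cmx (M1 *m M2) = cmx M1 *m cmx M2.
Proof. by rewrite !cmxE map_mxM. Qed.

Lemma Re_mulmx_cmx p q r (w : 'M[R[i]]_(p, q)) (M : 'M[R]_(q, r)) :
  map_mx (@complex.Re R) (w *m cmx M) = map_mx (@complex.Re R) w *m M.
Proof.
apply/matrixP => i j; rewrite !mxE (raddf_sum (@complex.Re R : Rcomplex R -> R)).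
apply: eq_bigr => k _; rewrite !mxE.
by case: (w i k) => u v /=; rewrite mulr0 subr0.
Qed.

Lemma Im_mulmx_cmx p q r (w : 'M[R[i]]_(p, q)) (M : 'M[R]_(q, r)) :
  map_mx (@complex.Im R) (w *m cmx M) = map_mx (@complex.Im R) w *m M.
Proof.
apply/matrixP => i j; rewrite !mxE (raddf_sum (@complex.Im R : Rcomplex R -> R)).
apply: eq_bigr => k _; rewrite !mxE.
by case: (w i k) => u v /=; rewrite mulr0 add0r.
Qed.

Lemma unstable_mode n (A : 'M[R]_n) : ~ stable A ->
  exists (a b : 'rV[R]_n) (x y : R), [/\ 1 <= x ^+ 2 + y ^+ 2,
    a *m A = x *: a - y *: b, b *m A = y *: a + x *: b &
    forall p (B : 'M[R]_(n, p)), a *m B = 0 -> b *m B = 0 -> ~ stabilizable A B].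
Proof.
move=> nstA; have [z [Az z_ge1]] : exists z, eigenvalue (cmx A) z /\ ~ `|z| < 1.
  apply: contrapT => noz; apply: nstA => z Az.
  by apply: contrapT => z_ge1; apply: noz; exists z.
have /eigenvalueP [w wA w0] := Az.
exists (map_mx (@complex.Re R) w), (map_mx (@complex.Im R) w).
exists (complex.Re z), (complex.Im z); split.
- have : 1 <= `|z| ^+ 2.
    by rewrite exprn_ege1 // real_leNgt ?normr_real ?real1 //; apply/negP.
  by rewrite -add_Re2_Im2 -[1 : R[i]]/(1%:C)%C lecR.
- rewrite -Re_mulmx_cmx wA; apply/matrixP => i j; rewrite !mxE.
  by case: (z) => ? ?; case: (w i j).
- rewrite -Im_mulmx_cmx wA; apply/matrixP => i j; rewrite !mxE.
  by case: (z) => ? ?; case: (w i j) => ? ? /=; rewrite addrC.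
move=> p B; rewrite -Re_mulmx_cmx -Im_mulmx_cmx => ReB0 ImB0 [L stL].
have wB0 : w *m cmx B = 0.
  move: (w *m cmx B) ReB0 ImB0 => W /matrixP ReW0 /matrixP ImW0.
  apply/matrixP => i j; have := ReW0 i j; have := ImW0 i j; rewrite !mxE.
  by case: (W i j) => ? ? /= -> ->.
apply/z_ge1/stL/eigenvalueP; exists w; last exact: w0.
by rewrite cmxD cmxM mulmxDr mulmxA wB0 mul0mx addr0.
Qed.

End UnstableMode.

Section Unbounded.
Variable R : realType.

(* [q X = a X a^T + b X b^T] grows at least by [q Q] under [f], while
   [q X <= W tr X]. *)
Lemma iter_lyap_tr_unbounded n (A Q P : 'M[R]_n) (a b : 'rV[R]_n) (x y : R) :
  psd Q -> psd P -> 1 <= x ^+ 2 + y ^+ 2 ->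
  a *m A = x *: a - y *: b -> b *m A = y *: a + x *: b ->
  0 < bform Q a a + bform Q b b ->
  forall M, exists k, M <= \tr (iter k (lyap A Q) P).
Proof.
move=> pQ pP xy_ge1 aA bA qQ_gt0 M.
pose q X := bform X a a + bform X b b.
pose W := (\sum_i `|a 0 i|) ^+ 2 + (\sum_i `|b 0 i|) ^+ 2.
have q_ge0 X : psd X -> 0 <= q X by move=> pX; rewrite addr_ge0 ?psd_bform.
have q_le_tr X : psd X -> q X <= W * \tr X.
  by move=> pX; rewrite mulrDl lerD ?bform_le_tr.
have q_grow k : k%:R * q Q <= q (iter k (lyap A Q) P).
  elim: k => [|k IHk]; first by rewrite mul0r q_ge0 ?psd_iter_lyap.
  have pk : psd (iter k (lyap A Q) P) by apply: psd_iter_lyap.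
  have -> : q (iter k.+1 (lyap A Q) P) =
            (x ^+ 2 + y ^+ 2) * q (iter k (lyap A Q) P) + q Q.
    by rewrite /q /= /lyap !bformDm addrACA (bform_rotation (psd_sym pk) aA bA).
  have := q_ge0 _ pk; rewrite -natr1 mulrDl mul1r; nra.
have W_gt0 : 0 < W.
  rewrite lt_def addr_ge0 ?sqr_ge0 // andbT; apply: contraTneq qQ_gt0 => W0.
  by rewrite -leNgt (le_trans (q_le_tr _ pQ)) // W0 mul0r.
have bound_ge0 : 0 <= W * `|M| / q Q by rewrite divr_ge0 ?mulr_ge0 // ltW.
have := archi_boundP bound_ge0; rewrite ltr_pdivrMr // => k_big.
exists (Num.bound (W * `|M| / q Q)); rewrite -(ler_pM2l W_gt0).
rewrite (le_trans (ler_wpM2l (ltW W_gt0) (ler_norm M))) //.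
rewrite (le_trans (ltW k_big)) // (le_trans (q_grow _)) //.
by apply/q_le_tr/psd_iter_lyap.
Qed.

Lemma unstable_iter_lyap_tr_unbounded n (A Q Qh P : 'M[R]_n) :
  psd Qh -> Qh *m Qh = Q -> stabilizable A Qh -> psd P -> ~ stable A ->
  forall M, exists k, M <= \tr (iter k (lyap A Q) P).
Proof.
move=> pQh QhQh stA pP nstA.
have [a [b [x [y [xy_ge1 aA bA hautus]]]]] := unstable_mode nstA.
have pQ : psd Q by rewrite -QhQh; apply/psd_sqr/psd_sym.
apply: (iter_lyap_tr_unbounded pQ pP xy_ge1 aA bA).
have bformQ u : bform Q u u = bform 1%:M (u *m Qh) (u *m Qh).
  by rewrite -bform_conj mulmx1 (psd_sym pQh) QhQh.
rewrite !bformQ; have [aQh0|aQh] := eqVneq (a *m Qh) 0.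
  have [bQh0|bQh] := eqVneq (b *m Qh) 0.
    by case: (hautus _ _ aQh0 bQh0 stA).
  by apply: ltr_wpDl; [apply/psd_bform/psd1 | apply: bform1_gt0].
by apply: ltr_wpDr; [apply/psd_bform/psd1 | apply: bform1_gt0].
Qed.

End Unbounded.

Section Threshold.
Variables (R : realType) (n : nat) (A Q Pbar : 'M[R]_n).
Hypothesis Pbar_le_f : loew_le Pbar (lyap A Q Pbar).

Local Notation f := (lyap A Q).
Local Notation S := (inS A Q Pbar).

(* The first index at which [c1 <= c0] gives the threshold, because [S] is a
   Loewner chain along which [c1 - c0] is nonincreasing. *)
Lemma threshold_rule_first_switch (c0 c1 : 'M[R]_n -> R) :
  (forall P P', S P -> S P' -> loew_le P P' -> c1 P' - c0 P' <= c1 P - c0 P) ->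
  (exists k, c1 (iter k f Pbar) <= c0 (iter k f Pbar)) ->
  exists Tth, threshold_rule A Q Pbar c0 c1 (Some Tth).
Proof.
move=> gap_anti switch.
have [k0 switch_k0 k0_min] := ex_minnP switch.
exists (iter k0 f Pbar); split=> [|_ [i ->]]; first by exists k0.
split=> [[le_ik0 neq_ik0] | le_k0i].
  have [lt_ik0|le_k0i] := ltnP i k0.
    by rewrite leNgt; apply: contraTN lt_ik0 => /ltW /k0_min; rewrite leqNgt.
  by case: neq_ik0; apply: loew_antisym => //; apply: loew_le_iter_lyap.
rewrite -subr_le0 (le_trans (gap_anti _ _ _ _ le_k0i)) ?subr_le0 //.
  by exists k0.
by exists i.
Qed.

Variables (lam E beta : R) (h : 'M[R]_n -> R).
Hypotheses (lam_gt0 : 0 < lam) (beta_gt0 : 0 < beta).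
Hypothesis h_mono :
  forall P P', S P -> S P' -> loew_le P P' -> h P <= h P'.

Local Notation c0 := (cost0 A Q beta h).
Local Notation c1 := (cost1 A Q Pbar lam E beta h).

Lemma cost_gap_antitone P P' : S P -> S P' -> loew_le P P' ->
  c1 P' - c0 P' <= c1 P - c0 P.
Proof.
move=> SP SP' PP'; have fPP' := loew_le_lyap A Q PP'.
have h_fPP' := h_mono (inS_lyap SP) (inS_lyap SP') fPP'.
have tr_fPP' := ler_wpM2l (ltW (mulr_gt0 beta_gt0 lam_gt0)) (loew_le_tr fPP').
have := ler_wpM2l (ltW lam_gt0) h_fPP'; rewrite /cost0 /cost1; lra.
Qed.

(* On [S], [c0 - c1 >= beta lam (tr f(P) - tr Pbar) - (1 - beta) E] because
   [h] is monotone and [Pbar] is the least element of [S]. *)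
Lemma unstable_switch Qh :
  psd Qh -> Qh *m Qh = Q -> stabilizable A Qh -> psd Pbar -> ~ stable A ->
  exists k, c1 (iter k f Pbar) <= c0 (iter k f Pbar).
Proof.
move=> pQh QhQh stA pPbar nstA; have bl_gt0 := mulr_gt0 beta_gt0 lam_gt0.
pose D := (1 - beta) * E / (beta * lam).
have [k tr_big] :=
  unstable_iter_lyap_tr_unbounded pQh QhQh stA pPbar nstA (\tr Pbar + D + 1).
exists k; have le_k_Sk : loew_le (iter k f Pbar) (iter k.+1 f Pbar).
  exact: loew_le_iter_lyap.
have h_fP : h Pbar <= h (iter k.+1 f Pbar).
  apply: h_mono; [by exists 0%N | by exists k.+1 |].
  exact: (loew_le_iter_lyap (i := 0%N)).
have := ler_wpM2l (ltW bl_gt0) (le_trans tr_big (loew_le_tr le_k_Sk)).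
have := ler_wpM2l (ltW lam_gt0) h_fP.
have : beta * lam * D = (1 - beta) * E by rewrite mulrC divfK ?gt_eqF.
rewrite /cost0 /cost1; nra.
Qed.

Lemma threshold_rule_exists Qh :
  psd Qh -> Qh *m Qh = Q -> stabilizable A Qh -> psd Pbar ->
  exists T, threshold_rule A Q Pbar c0 c1 T.
Proof.
move=> pQh QhQh stA pPbar.
have [switch|never] :=
  pselect (exists k, c1 (iter k f Pbar) <= c0 (iter k f Pbar)).
  have [Tth thr] := threshold_rule_first_switch cost_gap_antitone switch.
  by exists (Some Tth).
exists None; split=> [|_ [k ->]].
  by apply: contrapT => /(unstable_switch pQh QhQh stA pPbar).
by rewrite leNgt; apply/negP => /ltW switch_k; apply: never; exists k.
Qed.

End Threshold.

Section ValueMonotonicity.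
Variables (R : realType) (n : nat) (A Q Pbar : 'M[R]_n) (lam E beta : R).
Hypotheses (lam_ge0 : 0 <= lam) (lam_le1 : lam <= 1) (beta_ge0 : 0 <= beta).

Definition loew_nondecreasing (h : 'M[R]_n -> R) :=
  forall P P', loew_le P P' -> h P <= h P'.

Lemma bellman_nondecreasing h :
  loew_nondecreasing h -> loew_nondecreasing (bellman A Q Pbar lam E beta h).
Proof.
move=> h_mono P P' PP'; have fPP' := loew_le_lyap A Q PP'.
have tr_fPP' := loew_le_tr fPP'; have h_fPP' := h_mono _ _ fPP'.
have c0_le : cost0 A Q beta h P <= cost0 A Q beta h P'.
  by rewrite /cost0 lerD // ler_wpM2l.
have c1_le : cost1 A Q Pbar lam E beta h P <= cost1 A Q Pbar lam E beta h P'.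
  have lam'_ge0 : 0 <= 1 - lam by rewrite subr_ge0.
  have := ler_wpM2l (mulr_ge0 beta_ge0 lam'_ge0) tr_fPP'.
  have := ler_wpM2l lam'_ge0 h_fPP'; rewrite /cost1; lra.
by rewrite /bellman le_min !ge_min c0_le c1_le orbT.
Qed.

Lemma Jfin_nondecreasing K k : loew_nondecreasing (Jfin A Q Pbar lam E beta K k).
Proof.
rewrite /Jfin; elim: (K.+1 - k)%N => [|j IHj] /=; first by move=> P P' _.
exact: bellman_nondecreasing.
Qed.

Lemma rvi_nondecreasing s0 j : loew_nondecreasing (rvi A Q Pbar lam E beta s0 j).
Proof.
elim: j => [|j IHj] P P' PP' /=; first by [].
by rewrite lerB // bellman_nondecreasing.
Qed.

End ValueMonotonicity.

Local Open Scope classical_set_scope.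

Theorem theorem4 (R : realType) (n m : nat)
  (A Q Qh : 'M[R]_n) (C : 'M[R]_(m, n)) (Rv : 'M[R]_m) (Pbar : 'M[R]_n)
  (lam E beta : R) :
  psd Qh -> Qh *m Qh = Q -> pd Rv ->
  detectable A C -> stabilizable A Qh ->
  psd Pbar -> kf_step A Q C Rv Pbar = Pbar ->
  0 < lam <= 1 -> 0 <= E -> 0 < beta < 1 ->
  (* (i) finite horizon *)
  (forall K k : nat, (1 <= K)%N -> (1 <= k <= K)%N ->
     exists T : option 'M[R]_n,
       threshold_rule A Q Pbar
         (cost0 A Q beta (Jfin A Q Pbar lam E beta K k.+1))
         (cost1 A Q Pbar lam E beta (Jfin A Q Pbar lam E beta K k.+1)) T)
  /\
  (* (ii) infinite horizon, (rho, h) the limit of relative value iteration *)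
  (forall (s0 : 'M[R]_n) (rho : R) (h : 'M[R]_n -> R),
     inS A Q Pbar s0 ->
     (forall P, inS A Q Pbar P ->
        (fun j => rvi A Q Pbar lam E beta s0 j P) @ \oo --> h P) ->
     (forall P, inS A Q Pbar P ->
        rho + h P = bellman A Q Pbar lam E beta h P) ->
     exists T : option 'M[R]_n,
       threshold_rule A Q Pbar (cost0 A Q beta h)
         (cost1 A Q Pbar lam E beta h) T).
Proof.
(* Detectability only guarantees that [Pbar] exists, and of the limit [h] only
   its monotonicity matters, not the Bellman equation. *)
move=> pQh QhQh pdRv _ stA pPbar kfP /andP[lam_gt0 lam_le1] _ /andP[beta_gt0 _].
have pQ : psd Q by rewrite -QhQh; apply/psd_sqr/psd_sym.
have Pbar_le_f := kf_fixpoint_le_lyap pQ pdRv pPbar kfP.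
have lam_ge0 := ltW lam_gt0; have beta_ge0 := ltW beta_gt0.
split=> [K k _ _ | s0 rho h _ rvi_cvg _];
  apply: (threshold_rule_exists Pbar_le_f E lam_gt0 beta_gt0 _ pQh QhQh stA pPbar).
  by move=> P P' _ _; apply: Jfin_nondecreasing.
move=> P P' SP SP' PP'; apply: ler_cvg_to (rvi_cvg _ SP) (rvi_cvg _ SP') _.
by apply: nearW => j; apply: rvi_nondecreasing.
Qed.
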